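(* Tight GFG-NRWs are Büchi-type: every tight GFG-NRW $\mathcal{A}=\langle\Sigma,Q,Q_0,\delta,\alpha\rangle$ whose language is recognized by some GFG-NBW has an equivalent GFG-NBW on the same structure, i.e. there is a set $\alpha'\subseteq Q$ such that $\langle\Sigma,Q,Q_0,\delta,\alpha'\rangle$, viewed as a Büchi automaton, is GFG and recognizes $L(\mathcal{A})$.
   Context: An automaton $\langle\Sigma,Q,Q_0,\delta,\alpha\rangle$ has $\delta:Q\times\Sigma\to2^Q$; runs are $r_0r_1\cdots$ with $r_0\in Q_0$, $r_{i+1}\in\delta(r_i,a_{i+1})$, accepting if the set of infinitely visited states satisfies $\alpha$. Büchi ($\alpha\subseteq Q$): $S$ accepting iff $S\cap\alpha\ne\emptyset$. Rabin ($\alpha$ a set of pairs $\langle E,F\rangle$, $E$ bad, $F$ good): $S$ accepting iff some pair has $S\cap E=\emptyset$ and $S\cap F\neq\emptyset$. NRW/NBW: nondeterministic Rabin/Büchi word automaton. $\mathcal{A}$ is GFG if there is a strategy $g:\Sigma^*\to Q$ such that for every $w=a_1a_2\cdots$, $g(\epsilon),g(a_1),g(a_1a_2),\ldots$ is a run on $w$, accepting whenever $w\in L(\mathcal{A})$. Finite-state strategies are transducers $g=\langle\Sigma,Q,M,m_0,\rho,\tau\rangle$ (finite memories $M$, $\rho:M\times\Sigma\to M$ extended to words from $m_0$, $\tau:M\to Q$, $g(u)=\tau(\rho(u))$); $m$ is a memory of $q$ if $\tau(m)=q$. $\mathcal{A}_g=\langle\Sigma,M,m_0,\rho,\alpha_g\rangle$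 where $\alpha_g$ replaces each set $F$ in $\alpha$ by $\{m\mid\tau(m)\in F\}$. A transition $\langle q,a,q'\rangle$ is used by $g$ if $q=g(u)$, $q'=g(ua)$ for some $u$. For a set $P$ of finite paths, a combination is the union of state sets of a nonempty subset of $P$. For memories $m\neq m'$ with $\tau(m)=\tau(m')$, $m$ is replaceable by $m'$ if the set of paths of $\mathcal{A}_g$ from $m'$ to $m$ is empty or all its combinations are accepting w.r.t. $\alpha_g$. $\mathcal{A}$ is tight if for some finite-state strategy $g$ witnessing its GFGness, every transition of $\mathcal{A}$ is used by $g$ and no memory is replaceable by a different memory of the same state. *)

From mathcomp Require Import all_boot.
Set Implicit Arguments.
Unset Strict Implicit.
Unset Printing Implicit Defensive.

Section Automata.
Variables (Sigma : finType).

(* Infinite words w = a_1 a_2 ...; we index from 0: w i = a_(i+1). *)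
Definition word := nat -> Sigma.

Definition prefix (w : word) (n : nat) : seq Sigma := mkseq w n.

Definition inf_visited (T : Type) (r : nat -> T) : T -> Prop :=
  fun q => forall n, exists m, n <= m /\ r m = q.

Definition buchi_acc (T : finType) (alpha : {set T}) (S : T -> Prop) : Prop :=
  exists q, S q /\ q \in alpha.

Definition rabin_acc (T : finType) (alpha : {set {set T} * {set T}})
    (S : T -> Prop) : Prop :=
  exists EF, EF \in alpha /\ (forall q, S q -> q \notin EF.1) /\
             (exists q, S q /\ q \in EF.2).

Variable (Q : finType).

Definition is_run (Q0 : {set Q}) (delta : Q -> Sigma -> {set Q})
    (w : word) (r : nat -> Q) : Prop :=
  r 0 \in Q0 /\ forall i, r i.+1 \in delta (r i) (w i).

Definition lang (Q0 : {set Q}) (delta : Q -> Sigma -> {set Q})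
    (acc : (Q -> Prop) -> Prop) (w : word) : Prop :=
  exists r, is_run Q0 delta w r /\ acc (inf_visited r).

Definition gfg_strategy (Q0 : {set Q}) (delta : Q -> Sigma -> {set Q})
    (acc : (Q -> Prop) -> Prop) (g : seq Sigma -> Q) : Prop :=
  forall w : word,
    is_run Q0 delta w (fun i => g (prefix w i)) /\
    (lang Q0 delta acc w -> acc (inf_visited (fun i => g (prefix w i)))).

Definition is_GFG (Q0 : {set Q}) (delta : Q -> Sigma -> {set Q})
    (acc : (Q -> Prop) -> Prop) : Prop :=
  exists g, gfg_strategy Q0 delta acc g.

Definition transducer_strategy (M : finType) (m0 : M) (rho : M -> Sigma -> M)
    (tau : M -> Q) : seq Sigma -> Q :=
  fun u => tau (foldl rho m0 u).

Definition used_by (g : seq Sigma -> Q) (q : Q) (a : Sigma) (q' : Q) : Prop :=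
  exists u, q = g u /\ q' = g (rcons u a).

Definition alpha_g (M : finType) (tau : M -> Q)
    (alpha : {set {set Q} * {set Q}}) : {set {set M} * {set M}} :=
  [set ((tau @^-1: EF.1 : {set M}), (tau @^-1: EF.2 : {set M})) | EF : {set Q} * {set Q} in alpha].

(* Finite paths of A_g = <Sigma,M,m0,rho,alpha_g> from m1 to m2:
   m1 :: p is a path of the transition graph ending in m2; its set of
   states is m1 :: p. *)
Definition is_path_g (M : finType) (rho : M -> Sigma -> M) (m1 m2 : M)
    (p : seq M) : Prop :=
  path (fun x y => [exists a, rho x a == y]) m1 p /\ last m1 p = m2.

(* S is a combination of the set of paths P (a predicate on paths, each
   path p from m1 being represented by the state sequence m1 :: p):
   the union of the state sets of a nonempty subset of P. *)
Definition is_combination (M : finType) (m1 : M) (P : seq M -> Prop)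
    (S : M -> Prop) : Prop :=
  exists P' : seq M -> Prop,
    (forall p, P' p -> P p) /\ (exists p, P' p) /\
    (forall x, S x <-> exists p, P' p /\ x \in m1 :: p).

Definition replaceable (M : finType) (rho : M -> Sigma -> M) (tau : M -> Q)
    (alpha : {set {set Q} * {set Q}}) (m m' : M) : Prop :=
  m != m' /\ tau m = tau m' /\
  ((forall p, ~ is_path_g rho m' m p) \/
   (forall S, is_combination m' (is_path_g rho m' m) S ->
              rabin_acc (alpha_g tau alpha) S)).

Definition tight (Q0 : {set Q}) (delta : Q -> Sigma -> {set Q})
    (alpha : {set {set Q} * {set Q}}) : Prop :=
  exists (M : finType) (m0 : M) (rho : M -> Sigma -> M) (tau : M -> Q),
    gfg_strategy Q0 delta (rabin_acc alpha) (transducer_strategy m0 rho tau) /\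
    (forall q a q', q' \in delta q a ->
        used_by (transducer_strategy m0 rho tau) q a q') /\
    (forall m m', ~ replaceable rho tau alpha m m').

End Automata.

(* A tight strategy g, with memories M, lets us read the Rabin condition off the
   memory graph. Call a memory good if every nonempty cycle through it has an
   accepting image under tau, and let alpha' (good_states) be the set of states
   having a good memory.

   If a run of A visits such a state infinitely often, lift its final loop to a
   memory cycle through the good memory: every transition of A is used by g, and
   since no memory is replaceable, two memories of the same state are joined by
   walks whose image only adds a Rabin-rejecting set. Rabin-rejecting sets are
   closed under union, so the run is accepting.

   Conversely, let the g-run on w be accepting, with final memory loop c, and
   suppose no memory of c is good. Splicing a rejecting cycle into c at each of
   its memories gives a cycle d with c ++ d rejecting. But since L(A) is
   recognised by a GFG-NBW with strategy h, an accepting cycle absorbs any other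
   cycle: on u (d c^k0) (d c^k1) ..., each k_i chosen so that h meets its Büchi
   set during the block, h accepts, hence so does the g-run, whose final memory
   loop is c ++ d. *)

From Pilot Require Import Defs.
From mathcomp Require Import all_boot.
From mathcomp Require Import boolp.

Set Implicit Arguments.
Unset Strict Implicit.
Unset Printing Implicit Defensive.

Section InfinitelyOften.
Variable T : finType.
Implicit Types (r : nat -> T) (x : T).

Definition inf_set r : {set T} := [set x | `[< inf_visited r x >]].

Lemma inf_setP r x : reflect (inf_visited r x) (x \in inf_set r).
Proof. by rewrite inE; apply: asboolP. Qed.

Lemma inf_visitedE r : inf_visited r = (fun x => x \in inf_set r).
Proof. by apply/funext => x; apply/propext; split => /inf_setP. Qed.

Lemma inf_set_eventually r : exists N, forall i, N <= i -> r i \in inf_set r.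
Proof.
have /fin_all_exists[N HN] : forall x, exists n : nat,
    x \notin inf_set r -> forall i, n <= i -> r i != x.
  move=> x; have [/inf_setP xR|/existsNP[N HN]] := pselect (inf_visited r x).
    by exists 0; rewrite xR.
  by exists N => _ i Ni; apply/eqP => rix; apply: HN; exists i.
exists (\max_x N x) => i Ni; apply: contraT => nRi.
by move: (HN _ nRi i (leq_trans (leq_bigmax _) Ni)); rewrite eqxx.
Qed.

Lemma inf_set_hits r (P : pred T) :
  (forall N, exists2 i, N <= i & P (r i)) -> exists2 x, x \in inf_set r & P x.
Proof.
move=> hits; have [N HN] := inf_set_eventually r.
by have [i Ni Pi] := hits N; exists (r i); first exact: HN.
Qed.

Definition segment r i n : {set T} := \bigcup_(j < n.+1) [set r (i + j)].

Lemma segmentP r i n x :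
  reflect (exists2 j, j <= n & x = r (i + j)) (x \in segment r i n).
Proof.
apply: (iffP bigcupP) => [[j _ /set1P ->]|[j jn ->]]; first by exists j => //; rewrite -ltnS.
by exists (Ordinal (jn : j < n.+1)); rewrite ?set11.
Qed.

Lemma mem_segment r i n j : j <= n -> r (i + j) \in segment r i n.
Proof. by move=> jn; apply/segmentP; exists j. Qed.

Lemma segmentS r i n : segment r i n.+1 = segment r i n :|: [set r (i + n.+1)].
Proof. by rewrite /segment big_ord_recr. Qed.

Lemma inf_set_segment r i : (forall j, i <= j -> r j \in inf_set r) ->
  exists2 n, 0 < n & r (i + n) = r i /\ inf_set r = segment r i n.
Proof.
move=> infi.
have /fin_all_exists[pos Hpos] : forall x, exists p : nat,
    x \in inf_set r -> i <= p /\ r p = x.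
  move=> x; have [xinf|xn] := pselect (inf_visited r x).
    by have [j [ij rjx]] := xinf i; exists j.
  by exists 0 => /inf_setP.
have /inf_setP/(_ (\max_x pos x).+1)[i2 [ltmax ri2]] := infi i (leqnn i).
have ii2 : i < i2.
  have [ipos _] := Hpos _ (infi i (leqnn i)).
  exact: leq_ltn_trans ipos (leq_ltn_trans (leq_bigmax _) ltmax).
exists (i2 - i); first by rewrite subn_gt0.
rewrite subnKC ?(ltnW ii2) //; split=> //.
apply/setP => x; apply/idP/segmentP => [xinf|[j _ ->]]; last exact/infi/leq_addr.
have [ipos rpos] := Hpos x xinf; exists (pos x - i); last by rewrite subnKC.
by rewrite leq_sub2r // ltnW // (leq_ltn_trans (leq_bigmax x)).
Qed.

End InfinitelyOften.

Lemma inf_set_comp (T U : finType) (f : T -> U) (r : nat -> T) :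
  inf_set (f \o r) = f @: inf_set r.
Proof.
apply/setP => y; apply/inf_setP/imsetP => [yinf|[x /inf_setP xinf ->] N].
  have [|x xinf /eqP <-] := @inf_set_hits _ r (fun x => f x == y); last by exists x.
  by move=> N; have [i [Ni /eqP fri]] := yinf N; exists i.
by have [i [Ni rix]] := xinf N; exists i; rewrite /= rix.
Qed.

Definition accepting (Q : finType) (alpha : {set {set Q} * {set Q}}) (S : {set Q}) :=
  rabin_acc alpha (fun q => q \in S).

Section RabinSets.
Variables (Q : finType) (alpha : {set {set Q} * {set Q}}).
Implicit Types (A B R S : {set Q}).

Lemma rejecting0 : ~ accepting alpha set0.
Proof. by case=> EF [_ [_ [q []]]]; rewrite inE. Qed.

Lemma acceptingU A B : accepting alpha (A :|: B) -> accepting alpha A \/ accepting alpha B.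
Proof.
case=> EF [EFa [noE [q []]]]; rewrite inE => /orP[qS|qS] qF; [left|right];
  exists EF; split=> //; split=> [p pS|]; try by exists q.
  by apply: noE; rewrite inE pS.
by apply: noE; rewrite inE pS orbT.
Qed.

Lemma rejectingU A B :
  ~ accepting alpha A -> ~ accepting alpha B -> ~ accepting alpha (A :|: B).
Proof. by move=> nA nB /acceptingU[]. Qed.

Lemma rejecting_bigcup (I : finType) (P : pred I) (F : I -> {set Q}) :
  (forall i, P i -> ~ accepting alpha (F i)) -> ~ accepting alpha (\bigcup_(i | P i) F i).
Proof.
by apply: (big_ind (fun S => ~ accepting alpha S)); [exact: rejecting0 | exact: rejectingU].
Qed.

(* Rabin rejection is not inherited by subsets, so images of walks are tracked
   exactly, up to a rejecting summand. *)
Definition rejecting_extension R S := exists2 Y, ~ accepting alpha Y & S = R :|: Y.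

Lemma rejecting_extension_refl R : rejecting_extension R R.
Proof. by exists set0; [exact: rejecting0 | rewrite setU0]. Qed.

Lemma rejecting_extensionU R1 S1 R2 S2 : rejecting_extension R1 S1 ->
  rejecting_extension R2 S2 -> rejecting_extension (R1 :|: R2) (S1 :|: S2).
Proof.
by move=> [Y1 nY1 ->] [Y2 nY2 ->]; exists (Y1 :|: Y2); [exact: rejectingU | rewrite setUACA].
Qed.

Lemma rejecting_extension_rejecting R S :
  ~ accepting alpha R -> rejecting_extension R S -> ~ accepting alpha S.
Proof. by move=> nR [Y nY ->]; apply: rejectingU. Qed.

End RabinSets.

Lemma accepting_alpha_g (Q M : finType) (tau : M -> Q) (alpha : {set {set Q} * {set Q}})
    (S : {set M}) :
  accepting alpha (tau @: S) -> accepting (alpha_g tau alpha) S.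
Proof.
case=> EF [EFa [noE [q [/imsetP[x xS ->] qF]]]].
exists (tau @^-1: EF.1, tau @^-1: EF.2); split; first exact: imset_f.
split=> [y yS|]; last by exists x; rewrite inE.
by rewrite inE; apply: noE; apply: imset_f.
Qed.

Section Slices.
Variable Sigma : finType.
Implicit Type w : word Sigma.

Definition slice w i n : seq Sigma := mkseq (fun j => w (i + j)) n.

Lemma size_slice w i n : size (slice w i n) = n.
Proof. exact: size_mkseq. Qed.

Lemma prefixD w i n : Defs.prefix w (i + n) = Defs.prefix w i ++ slice w i n.
Proof.
by rewrite /Defs.prefix /slice /mkseq iotaD map_cat (addnC 0 i) iotaDl -map_comp.
Qed.

Lemma take_slice w i n t : t <= n -> take t (slice w i n) = slice w i t.
Proof. by move=> tn; rewrite /slice /mkseq -map_take take_iota (minn_idPl tn). Qed.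

End Slices.

Section Walks.
Variables (Sigma M : finType) (rho : M -> Sigma -> M).
Implicit Types (x y : M) (u v : seq Sigma).

Definition visited x u : {set M} := [set y in x :: scanl rho x u].

Lemma visitedP x u y :
  reflect (exists2 t, t <= size u & y = foldl rho x (take t u)) (y \in visited x u).
Proof.
rewrite inE; apply: (iffP (nthP x)); rewrite /= size_scanl => -[t tu ty];
  by exists t; rewrite // -?ty nth_cons_scanl.
Qed.

Lemma mem_visited_start x u : x \in visited x u.
Proof. by rewrite inE mem_head. Qed.

Lemma mem_visited_foldl x u : foldl rho x u \in visited x u.
Proof. by apply/visitedP; exists (size u); rewrite ?take_size. Qed.

Lemma visited_nil x : visited x [::] = [set x].
Proof. by apply/setP => y; rewrite !inE. Qed.

Lemma visited_cons x a u : visited x (a :: u) = x |: visited (rho x a) u.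
Proof. by apply/setP => y; rewrite !inE. Qed.

Lemma visited_cat x u v : visited x (u ++ v) = visited x u :|: visited (foldl rho x u) v.
Proof.
apply/setP => y; rewrite !inE scanl_cat mem_cat orbA.
have [->|_] := eqVneq y (foldl rho x u); last by [].
by have := mem_visited_foldl x u; rewrite inE in_cons => ->.
Qed.

Lemma foldl_flatten_cycles x (us : seq (seq Sigma)) :
  (forall u, u \in us -> foldl rho x u = x) -> foldl rho x (flatten us) = x.
Proof.
elim: us => //= u us IH cyc; rewrite foldl_cat cyc ?mem_head // IH // => v vus.
by rewrite cyc // in_cons vus orbT.
Qed.

Lemma visited_flatten_cycles x (us : seq (seq Sigma)) :
  (forall u, u \in us -> foldl rho x u = x) ->
  visited x (flatten us) = x |: \bigcup_(u <- us) visited x u.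
Proof.
elim: us => [|u us IH] cyc /=; first by rewrite visited_nil big_nil setU0.
rewrite visited_cat cyc ?mem_head // IH => [|v vus]; first by rewrite big_cons setUCA.
by rewrite cyc // in_cons vus orbT.
Qed.

Lemma is_path_g_scanl x y p : is_path_g rho x y p ->
  exists2 u, p = scanl rho x u & foldl rho x u = y.
Proof.
case=> + <-; elim: p x => [|z p IH] x /=; first by exists [::].
case/andP => /existsP[a /eqP <-] /IH[u -> <-].
by exists (a :: u).
Qed.

Lemma round_trip (I : finType) (i0 : I) x y (U V : I -> seq Sigma) :
    (forall i, foldl rho x (U i) = y) -> (forall i, foldl rho y (V i) = x) ->
  exists2 u, foldl rho x u = y &
    visited x u = \bigcup_i visited x (U i) :|: \bigcup_i visited y (V i).
Proof.
move=> Uxy Vyx; pose loops := [seq V i ++ U i | i <- index_enum I].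
have loopy s : s \in loops -> foldl rho y s = y.
  by case/mapP => i _ ->; rewrite foldl_cat Vyx Uxy.
exists (U i0 ++ flatten loops); first by rewrite foldl_cat Uxy foldl_flatten_cycles.
rewrite visited_cat Uxy visited_flatten_cycles // big_map.
under eq_bigr => i _ do rewrite visited_cat Vyx.
have y0 : visited x (U i0) :|: [set y] = visited x (U i0).
  by apply/setUidPl; rewrite sub1set -(Uxy i0) mem_visited_foldl.
have sub0 : visited x (U i0) \subset \bigcup_i visited x (U i) by apply: bigcup_sup.
by rewrite big_split /= setUA y0 setUCA (setUidPr sub0) setUC.
Qed.

Definition memory_run m0 (w : word Sigma) i := foldl rho m0 (Defs.prefix w i).

Lemma memory_run_slice m0 w i n :
  foldl rho (memory_run m0 w i) (slice w i n) = memory_run m0 w (i + n).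
Proof. by rewrite /memory_run prefixD foldl_cat. Qed.

Lemma visited_slice m0 w i n :
  visited (memory_run m0 w i) (slice w i n) = segment (memory_run m0 w) i n.
Proof.
apply/setP => x; apply/visitedP/segmentP => -[t]; rewrite ?size_slice => tn ->;
  by exists t; rewrite ?size_slice // take_slice // memory_run_slice.
Qed.

Variable C : M -> seq Sigma.
Hypothesis C_cycle : forall x, foldl rho x (C x) = x.

Fixpoint splice x u := C x ++ if u is a :: u' then a :: splice (rho x a) u' else [::].

Lemma foldl_splice x u : foldl rho x (splice x u) = foldl rho x u.
Proof. by elim: u x => [|a u IH] x; rewrite /= foldl_cat C_cycle /= ?IH. Qed.

Lemma visited_splice x u :
  visited x (splice x u) = \bigcup_(y in visited x u) visited y (C y).
Proof.
elim: u x => [|a u IH] x /=; first by rewrite cats0 visited_nil big_set1.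
rewrite visited_cat C_cycle !visited_cons IH bigcup_setU big_set1 setUA.
by congr (_ :|: _); apply/setUidPl; rewrite sub1set mem_visited_start.
Qed.

End Walks.

Section Detour.
Variables (Sigma Q M : finType) (rho : M -> Sigma -> M) (tau : M -> Q).
Variable alpha : {set {set Q} * {set Q}}.

Lemma combination_words x y (S : M -> Prop) :
  is_combination x (is_path_g rho x y) S ->
  exists2 W : M -> seq Sigma, forall z, foldl rho x (W z) = y &
    S = (fun z => z \in \bigcup_i visited rho x (W i)).
Proof.
case=> P' [P'paths [[p0 P'p0] defS]].
have /fin_all_exists[pz Hpz] : forall z, exists p, P' p /\ (S z -> z \in x :: p).
  move=> z; case: (pselect (S z)) => [/defS[p [P'p zp]]|nSz]; first by exists p.
  by exists p0; split=> // /nSz.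
have /fin_all_exists[W HW] : forall z, exists u, pz z = scanl rho x u /\ foldl rho x u = y.
  by move=> z; have [u ? ?] := is_path_g_scanl (P'paths _ (proj1 (Hpz z))); exists u.
exists W => [z|]; first by case: (HW z).
apply/funext => z; apply/propext; split => [Sz|/bigcupP[i _]].
  by apply/bigcupP; exists z => //; rewrite inE -(proj1 (HW z)); apply: (proj2 (Hpz z)).
rewrite inE -(proj1 (HW i)) => zi; apply/defS; exists (pz i); split=> //.
by case: (Hpz i).
Qed.

Hypothesis irreplaceable : forall x y, ~ replaceable rho tau alpha x y.

Lemma rejecting_walk_family x y : x != y -> tau x = tau y ->
  exists2 W : M -> seq Sigma, forall z, foldl rho x (W z) = y &
    ~ accepting alpha (tau @: \bigcup_z visited rho x (W z)).
Proof.
move=> xy txy.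
have /existsNP[S /not_implyP[comb nacc]] :
    ~ forall S, is_combination x (is_path_g rho x y) S -> rabin_acc (alpha_g tau alpha) S.
  by move=> acc; apply: (@irreplaceable y x); split; [rewrite eq_sym | split; [| right]].
have [W Wxy defS] := combination_words comb.
by exists W => // acc; apply: nacc; rewrite defS; apply: accepting_alpha_g.
Qed.

Lemma detour x y : tau x = tau y ->
  exists2 u, foldl rho x u = y &
    rejecting_extension alpha [set tau x] (tau @: visited rho x u).
Proof.
have [<- _|xy txy] := eqVneq x y.
  by exists [::]; rewrite // visited_nil imset_set1; apply: rejecting_extension_refl.
have [U Uxy nU] := rejecting_walk_family xy txy.
have [V Vyx nV] := rejecting_walk_family (contra_neq esym xy) (esym txy).
have [u uxy visu] := round_trip x Uxy Vyx.
exists u => //; exists (tau @: visited rho x u).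
  by rewrite visu imsetU; apply: rejectingU.
by apply/esym/setUidPr; rewrite sub1set imset_f // mem_visited_start.
Qed.

End Detour.

Section IteratedExtension.
Variables (Sigma M : finType) (rho : M -> Sigma -> M) (m0 m : M) (X : {set M}).
Variables (a0 : Sigma) (u : seq Sigma) (ext : seq Sigma -> seq Sigma).
Hypothesis u_reaches : foldl rho m0 u = m.
Hypothesis ext_cycle : forall v, foldl rho m0 v = m ->
  [/\ ext v != [::], foldl rho m (ext v) = m & visited rho m (ext v) = X].

Definition ext_iter n := iter n (fun v => v ++ ext v) u.

(* The default letter a0 is never read: ext_iter i.+1 has more than i letters. *)
Definition ext_limit : word Sigma := fun i => nth a0 (ext_iter i.+1) i.

Lemma ext_iter0 : ext_iter 0 = u.
Proof. by []. Qed.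

Lemma ext_iterS n : ext_iter n.+1 = ext_iter n ++ ext (ext_iter n).
Proof. by []. Qed.

Lemma foldl_ext_iter n : foldl rho m0 (ext_iter n) = m.
Proof. by elim: n => // n IH; rewrite ext_iterS foldl_cat IH; case: (ext_cycle IH). Qed.

Lemma size_ext_iter n : n <= size (ext_iter n).
Proof.
elim: n => // n IH; rewrite ext_iterS size_cat -addn1 leq_add // lt0n size_eq0.
by case: (ext_cycle (foldl_ext_iter n)).
Qed.

Lemma ext_iter_cat n k : exists s, ext_iter (n + k) = ext_iter n ++ s.
Proof.
elim: k => [|k [s IH]]; first by exists [::]; rewrite addn0 cats0.
by exists (s ++ ext (ext_iter (n + k))); rewrite addnS ext_iterS IH catA.
Qed.

Lemma nth_ext_iter n1 n2 t : t < size (ext_iter n1) -> t < size (ext_iter n2) ->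
  nth a0 (ext_iter n1) t = nth a0 (ext_iter n2) t.
Proof.
have widen n k :
    t < size (ext_iter n) -> nth a0 (ext_iter n) t = nth a0 (ext_iter (n + k)) t.
  by move=> tn; have [s ->] := ext_iter_cat n k; rewrite nth_cat tn.
by move=> t1 t2; rewrite (widen n1 n2 t1) (widen n2 n1 t2) addnC.
Qed.

Lemma prefix_ext_limit n j : j <= size (ext_iter n) ->
  Defs.prefix ext_limit j = take j (ext_iter n).
Proof.
move=> jn; apply: (@eq_from_nth _ a0) => [|t]; rewrite size_mkseq ?size_takel // => tj.
rewrite nth_mkseq // nth_take //; apply: nth_ext_iter; first exact: size_ext_iter.
exact: leq_trans tj jn.
Qed.

Lemma memory_run_ext_limit n i : i <= size (ext_iter n) ->
  memory_run rho m0 ext_limit i = foldl rho m0 (take i (ext_iter n)).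
Proof. by move=> /prefix_ext_limit; rewrite /memory_run => ->. Qed.

Lemma ext_iter_cycle n : 0 < n ->
  exists s, [/\ ext_iter n = u ++ s, foldl rho m s = m & visited rho m s = X].
Proof.
case: n => // n _; elim: n => [|n [s [Es sm sX]]].
  by case: (ext_cycle u_reaches) => _ em eX; exists (ext u).
have [_ em eX] := ext_cycle (foldl_ext_iter n.+1).
exists (s ++ ext (ext_iter n.+1)); split.
- by rewrite ext_iterS Es catA.
- by rewrite foldl_cat sm em.
- by rewrite visited_cat sm sX eX setUid.
Qed.

Lemma inf_set_ext_limit : inf_set (memory_run rho m0 ext_limit) = X.
Proof.
have mX : m \in X by case: (ext_cycle u_reaches) => _ _ <-; exact: mem_visited_start.
have block n i : size u <= i <= size (ext_iter n) ->
    foldl rho m0 (take i (ext_iter n)) \in X.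
  elim: n i => [|n IH] i /andP[ui iN].
    by rewrite ext_iter0 take_oversize ?u_reaches // -ext_iter0.
  rewrite ext_iterS take_cat; case: ltnP => [ilt|ige]; first by rewrite IH // ui ltnW.
  have [_ _ <-] := ext_cycle (foldl_ext_iter n).
  rewrite foldl_cat foldl_ext_iter; apply/visitedP; exists (i - size (ext_iter n)) => //.
  by rewrite leq_subLR -size_cat -ext_iterS.
apply/setP => x; apply/inf_setP/idP => [xinf|xX N].
  have [i [ui <-]] := xinf (size u).
  by rewrite (memory_run_ext_limit (size_ext_iter i)) block // ui size_ext_iter.
have [_ _ eX] := ext_cycle (foldl_ext_iter N).
have /visitedP[t te ->] : x \in visited rho m (ext (ext_iter N)) by rewrite eX.
exists (size (ext_iter N) + t); split.
  exact: leq_trans (size_ext_iter N) (leq_addr _ _).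
rewrite (@memory_run_ext_limit N.+1); last by rewrite ext_iterS size_cat leq_add2l.
by rewrite ext_iterS take_cat ltnNge leq_addr /= addKn foldl_cat foldl_ext_iter.
Qed.

End IteratedExtension.

Section CycleAbsorption.
Variables (Sigma M : finType) (rho : M -> Sigma -> M) (m0 : M).
(* Acceptance of memory runs is a Büchi condition on prefixes: in the
   application, B v says that the GFG-NBW strategy is in its Büchi set after v. *)
Variables (Acc : {set M} -> Prop) (B : pred (seq Sigma)).
Hypothesis Acc_hits : forall w : word Sigma,
  Acc (inf_set (memory_run rho m0 w)) <-> forall N, exists2 j, N <= j & B (Defs.prefix w j).
Variables (m : M) (c : seq Sigma).
Hypotheses (c_nonempty : c != [::]) (c_cycle : foldl rho m c = m).
Hypothesis c_acc : Acc (visited rho m c).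

Lemma accepting_cycle_hits v : foldl rho m0 v = m ->
  exists s, [/\ foldl rho m s = m, visited rho m s = visited rho m c &
    exists2 j, size v < j <= size (v ++ s) & B (take j (v ++ s))].
Proof.
move=> vm; have [a0 _] : exists a0 : Sigma, true by case: c c_nonempty => // a; exists a.
have cyc v' : foldl rho m0 v' = m ->
    [/\ c != [::], foldl rho m c = m & visited rho m c = visited rho m c] by [].
have /Acc_hits/(_ (size v).+1)[j vj Bj] :
    Acc (inf_set (memory_run rho m0 (ext_limit a0 v (fun=> c)))).
  by rewrite (inf_set_ext_limit a0 vm cyc).
have [s [Es sm sX]] := ext_iter_cycle vm cyc (leq_ltn_trans (leq0n _) vj).
have jv := size_ext_iter vm cyc j.
exists s; split => //; exists j; first by rewrite vj -Es.
by rewrite -Es -(prefix_ext_limit a0 vm cyc jv).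
Qed.

Lemma accepting_cycle_cat u d : foldl rho m0 u = m -> foldl rho m d = m ->
  Acc (visited rho m (c ++ d)).
Proof.
move=> um dm; have [a0 _] : exists a0 : Sigma, true by case: c c_nonempty => // a; exists a.
have /choice[S HS] : forall v, exists s, foldl rho m0 v = m ->
    [/\ foldl rho m s = m, visited rho m s = visited rho m c &
      exists2 j, size v < j <= size (v ++ s) & B (take j (v ++ s))].
  move=> v; case: (pselect (foldl rho m0 v = m)) => [/accepting_cycle_hits[s ?]|nvm].
    by exists s.
  by exists [::] => /nvm.
(* After v, take the detour d, then repeat c until B holds again. *)
pose ext v := d ++ S (v ++ d).
have vdm v : foldl rho m0 v = m -> foldl rho m0 (v ++ d) = m by rewrite foldl_cat => ->.
have ext_cycle v : foldl rho m0 v = m ->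
    [/\ ext v != [::], foldl rho m (ext v) = m &
      visited rho m (ext v) = visited rho m (c ++ d)].
  move=> /vdm/HS[sm sX [j /andP[lt le] _]]; split.
  - rewrite /ext -size_eq0 size_cat addn_eq0 negb_and; apply/orP; right.
    by rewrite -lt0n -(ltn_add2l (size (v ++ d))) addn0 -size_cat (leq_trans lt le).
  - by rewrite foldl_cat dm sm.
  - by rewrite !visited_cat dm c_cycle sX setUC.
rewrite -(inf_set_ext_limit a0 um ext_cycle); apply/Acc_hits => N.
have [_ _ [j /andP[lt le] Bj]] := HS _ (vdm _ (foldl_ext_iter um ext_cycle N)).
exists j.
  have := leq_trans (size_ext_iter um ext_cycle N) (leq_addr (size d) _).
  by rewrite -size_cat => /leq_ltn_trans/(_ lt)/ltnW.
by rewrite (@prefix_ext_limit _ _ _ _ _ _ a0 _ _ um ext_cycle N.+1) ?ext_iterS /ext catA.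
Qed.

End CycleAbsorption.

Section TightAutomaton.
Variables (Sigma Q M : finType) (Q0 : {set Q}) (delta : Q -> Sigma -> {set Q}).
Variables (alpha : {set {set Q} * {set Q}}) (m0 : M) (rho : M -> Sigma -> M) (tau : M -> Q).
Local Notation g := (transducer_strategy m0 rho tau).
Hypothesis g_gfg : gfg_strategy Q0 delta (rabin_acc alpha) g.
Hypothesis g_uses_all : forall q a q', q' \in delta q a -> used_by g q a q'.
Hypothesis irreplaceable : forall x y, ~ replaceable rho tau alpha x y.

Definition good x :=
  forall u, u != [::] -> foldl rho x u = x -> accepting alpha (tau @: visited rho x u).

Definition good_states : {set Q} := tau @: [set x | `[< good x >]].

Lemma lift_transition nu q a q' : tau nu = q -> q' \in delta q a ->
  exists e, [/\ e != [::], tau (foldl rho nu e) = q' &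
    rejecting_extension alpha [set q; q'] (tau @: visited rho nu e)].
Proof.
move=> <- /g_uses_all[v []]; rewrite /transducer_strategy foldl_rcons => tnu ->.
have [d dnu ext] := detour irreplaceable tnu.
exists (rcons d a); split; [by rewrite -size_eq0 size_rcons | by rewrite foldl_rcons dnu |].
rewrite -cats1 visited_cat dnu visited_cons visited_nil imsetU imsetU1 imset_set1 -tnu.
rewrite -{1}(setUid [set tau nu]) -setUA.
exact: rejecting_extensionU ext (rejecting_extension_refl _ _).
Qed.

Lemma lift_segment (w : word Sigma) (r : nat -> Q) i x :
  (forall j, r j.+1 \in delta (r j) (w j)) -> tau x = r i ->
  forall n, exists u, [/\ tau (foldl rho x u) = r (i + n), n <= size u &
    rejecting_extension alpha (segment r i n) (tau @: visited rho x u)].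
Proof.
move=> run txi; elim=> [|n [u [tu nu ext]]].
  exists [::]; rewrite addn0 visited_nil imset_set1 txi /segment big_ord1 addn0.
  by split=> //; apply: rejecting_extension_refl.
have [e [e0 te ext']] := lift_transition tu (run (i + n)).
exists (u ++ e); split.
- by rewrite foldl_cat addnS.
- by rewrite size_cat -addn1 leq_add // lt0n size_eq0.
have -> : segment r i n.+1 = segment r i n :|: [set r (i + n); r (i + n).+1].
  rewrite segmentS setUA addnS; congr (_ :|: _); apply/esym/setUidPl.
  by rewrite sub1set mem_segment.
by rewrite visited_cat imsetU; apply: rejecting_extensionU.
Qed.

Lemma good_run_accepting w r x :
  is_run Q0 delta w r -> good x -> tau x \in inf_set r -> accepting alpha (inf_set r).
Proof.
case=> _ run goodx /inf_setP xinf; apply: contrapT => nacc.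
have [N HN] := inf_set_eventually r.
have [i [Ni ri]] := xinf N.
have [n n0 [rin defR]] := inf_set_segment (fun j ij => HN j (leq_trans Ni ij)).
have [u [tu nu ext]] := lift_segment run (esym ri) n.
have [d dx ext'] := detour irreplaceable (etrans tu (etrans rin ri)).
have : rejecting_extension alpha (segment r i n) (tau @: visited rho x (u ++ d)).
  have := rejecting_extensionU ext ext'; rewrite visited_cat imsetU (setUidPl _) //.
  by rewrite sub1set tu mem_segment.
have nseg : ~ accepting alpha (segment r i n) by rewrite -defR.
move=> /(rejecting_extension_rejecting nseg); apply.
apply: goodx; last by rewrite foldl_cat dx.
by rewrite -size_eq0 size_cat -lt0n (leq_trans n0) // (leq_trans nu) ?leq_addr.
Qed.

Lemma good_states_accepting w r : is_run Q0 delta w r ->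
  buchi_acc good_states (inf_visited r) -> rabin_acc alpha (inf_visited r).
Proof.
move=> run [q [/inf_setP qinf /imsetP[x]]]; rewrite inE => /asboolP goodx qx.
by rewrite inf_visitedE; apply: good_run_accepting run goodx _; rewrite -qx.
Qed.

Lemma lang_good_states w :
  lang Q0 delta (buchi_acc good_states) w -> lang Q0 delta (rabin_acc alpha) w.
Proof. by case=> r [run acc]; exists r; split=> //; apply: good_states_accepting run acc. Qed.

Variables (Q' : finType) (Q0' : {set Q'}) (delta' : Q' -> Sigma -> {set Q'}) (beta : {set Q'}).
Variable h : seq Sigma -> Q'.
Hypothesis h_gfg : gfg_strategy Q0' delta' (buchi_acc beta) h.
Hypothesis same_lang : forall w,
  lang Q0' delta' (buchi_acc beta) w <-> lang Q0 delta (rabin_acc alpha) w.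

Lemma inf_visited_g_run w : inf_visited (fun i => g (Defs.prefix w i)) =
  (fun q => q \in tau @: inf_set (memory_run rho m0 w)).
Proof. by rewrite -inf_set_comp; apply: inf_visitedE. Qed.

Lemma lang_memory_run w : lang Q0 delta (rabin_acc alpha) w <->
  accepting alpha (tau @: inf_set (memory_run rho m0 w)).
Proof.
rewrite /accepting -inf_visited_g_run; split=> [/(proj2 (g_gfg w))//|acc].
by exists (fun i => g (Defs.prefix w i)); split=> //; case: (g_gfg w).
Qed.

Lemma lang_buchi_hits w : lang Q0 delta (rabin_acc alpha) w <->
  forall N, exists2 j, N <= j & h (Defs.prefix w j) \in beta.
Proof.
rewrite -same_lang; split=> [/(proj2 (h_gfg w))[q [qinf qb]] N|hits].
  by have [j [Nj hj]] := qinf N; exists j; rewrite // hj.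
exists (fun i => h (Defs.prefix w i)); split; first by case: (h_gfg w).
have [q /inf_setP qinf qb] :=
  @inf_set_hits _ (fun i => h (Defs.prefix w i)) (fun q => q \in beta) hits.
by exists q.
Qed.

Lemma accepting_memory_run_good w :
  accepting alpha (tau @: inf_set (memory_run rho m0 w)) ->
  exists2 x, x \in inf_set (memory_run rho m0 w) & good x.
Proof.
set R := inf_set _ => accR; apply: contrapT => nogood.
have /fin_all_exists[C HC] : forall x, exists u,
    foldl rho x u = x /\ (x \in R -> ~ accepting alpha (tau @: visited rho x u)).
  move=> x; have [xR|nxR] := boolP (x \in R); last first.
    by exists [::]; split=> // xR; rewrite xR in nxR.
  have : ~ good x by move=> gx; apply: nogood; exists x.
  by move=> /existsNP[u /not_implyP[_ /not_implyP[ux nacc]]]; exists u.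
have [N HN] := inf_set_eventually (memory_run rho m0 w).
have [n n0 [ret defR]] := inf_set_segment HN.
pose x := memory_run rho m0 w N; pose c := slice w N n.
have c_cycle : foldl rho x c = x by rewrite memory_run_slice ret.
have visc : visited rho x c = R by rewrite visited_slice -defR.
have C_cycle y : foldl rho y (C y) = y by case: (HC y).
have : accepting alpha (tau @: visited rho x (c ++ splice rho C x c)).
  apply: (@accepting_cycle_cat _ _ rho m0 (fun X => accepting alpha (tau @: X))
    (fun v => h v \in beta)) => //.
  - by move=> w'; rewrite -lang_memory_run; apply: lang_buchi_hits.
  - by rewrite -size_eq0 size_slice -lt0n.
  - by rewrite visc.
  - by rewrite foldl_splice.
rewrite visited_cat c_cycle (visited_splice C_cycle) (setUidPr _).
  rewrite (big_morph _ (imsetU tau) (imset0 tau)); apply: rejecting_bigcup => y.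
  by rewrite visc => yR; apply: (proj2 (HC y)).
by apply/subsetP => y yc; apply/bigcupP; exists y => //; apply: mem_visited_start.
Qed.

Lemma g_run_good_states w : lang Q0 delta (rabin_acc alpha) w ->
  buchi_acc good_states (inf_visited (fun i => g (Defs.prefix w i))).
Proof.
move=> /lang_memory_run/accepting_memory_run_good[x xinf goodx].
rewrite inf_visited_g_run; exists (tau x); split; apply: imset_f => //.
by rewrite inE; apply/asboolP.
Qed.

End TightAutomaton.

Theorem theorem13 (Sigma Q : finType) (Q0 : {set Q})
    (delta : Q -> Sigma -> {set Q}) (alpha : {set {set Q} * {set Q}}) :
  is_GFG Q0 delta (rabin_acc alpha) ->
  tight Q0 delta alpha ->
  (exists (Q' : finType) (Q0' : {set Q'}) (delta' : Q' -> Sigma -> {set Q'})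
          (beta : {set Q'}),
      is_GFG Q0' delta' (buchi_acc beta) /\
      forall w : word Sigma,
        lang Q0' delta' (buchi_acc beta) w <-> lang Q0 delta (rabin_acc alpha) w) ->
  exists alpha' : {set Q},
    is_GFG Q0 delta (buchi_acc alpha') /\
    forall w : word Sigma,
      lang Q0 delta (buchi_acc alpha') w <-> lang Q0 delta (rabin_acc alpha) w.
Proof.
(* GFG-ness of A is part of tightness. *)
move=> _ [M [m0 [rho [tau [g_gfg [g_uses irrepl]]]]]].
move=> [Q' [Q0' [delta' [beta [[h h_gfg] same]]]]].
have sound := lang_good_states g_uses irrepl.
have complete w := g_run_good_states g_gfg h_gfg same (w := w).
exists (good_states alpha rho tau); split=> [|w].
  exists (transducer_strategy m0 rho tau) => w; split; first by case: (g_gfg w).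
  by move=> /sound /complete.
split=> [/sound //|/complete acc].
exists (fun i => transducer_strategy m0 rho tau (Defs.prefix w i)).
by split=> //; case: (g_gfg w).
Qed.
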